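(* Let $\mathcal{T}$ be an $l$-eligible microdata table and run the algorithm described in the context (arbitrary tie-breaking). If the algorithm terminates during Phase Two, then $|\ddot{R}| \le l\cdot h(\dot{R}) + l - 1$, where $\dot{R}$ is $R$ at the end of Phase One and $\ddot{R}$ is $R$ at termination.
   Context: A microdata table $\mathcal{T}$ is a multiset of $n$ tuples with values on $d$ quasi-identifier (QI) attributes and one sensitive attribute (SA). For a multiset $Q$ and SA value $v$, $h(Q,v)$ is the number of tuples in $Q$ with SA value $v$, $h(Q)=\max_v h(Q,v)$, pillars of $Q$ are the $v$ with $h(Q,v)=h(Q)$; $Q$ is $l$-eligible if $|Q|\ge l\cdot h(Q)$. Let $Q_1,\dots,Q_s$ be the maximal classes of tuples of $\mathcal{T}$ with identical values on all QI attributes; the algorithm only moves tuples from these groups into a set $R$ (initially empty). Phase One: for each $i$, while $Q_i$ is not $l$-eligible, move a tuple of a pillar of $Q_i$ to $R$; call the result $\dot{Q}_i,\dot{R}$; if $R$ is $l$-eligible, terminate. Phase Two terminology (w.r.t. current state): a group $Q$ is thin if $|Q|=l\cdot h(Q)$ and fat if $|Q|\ge l\cdot h(Q)+1$; $Q$ is conflicting if some pillar of $Q$ is a pillar of $R$; $Q$ is dead if thin and conflicting, alive otherwise; an SA value $v$ is alive if some alive group $Q$ has $h(Q,v)>0$. Phase Two iterates: if no SA value is alive, Phase Two ends (go to Phase Three). Otherwise pick an alive SA value $v$ minimizing $h(R,v)$ and an alive group $Q$ with $h(Q,v)>0$ (ties arbitrary); if $Q$ is fat move one tuple with SA value $v$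 from $Q$ to $R$; if $Q$ is thin move one tuple of each pillar of $Q$ to $R$. If $R$ is now $l$-eligible, the algorithm terminates. *)

(* Multisets of SA values are modelled as sequences
   (only multiplicities [count_mem] and [size] are ever used). *)
From mathcomp Require Import all_boot.
Set Implicit Arguments. Unset Strict Implicit. Unset Printing Implicit Defensive.

Section Anon.
Variables (V : eqType) (l : nat).

Definition hv (Q : seq V) (v : V) : nat := count_mem v Q.
Definition h (Q : seq V) : nat := \max_(v <- Q) hv Q v.
Definition pillar (Q : seq V) (v : V) : bool := (v \in Q) && (hv Q v == h Q).
Definition eligible (Q : seq V) : bool := l * h Q <= size Q.

Inductive phase1_group : seq V -> seq V -> seq V -> seq V -> Prop :=
| p1g_done Q R : eligible Q -> phase1_group Q R Q R
| p1g_step Q R v Q' R' :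
    ~~ eligible Q -> pillar Q v ->
    phase1_group (rem v Q) (v :: R) Q' R' -> phase1_group Q R Q' R'.

Inductive phase1 : seq (seq V) -> seq V -> seq (seq V) -> seq V -> Prop :=
| p1_nil R : phase1 [::] R [::] R
| p1_cons Q Qs R Q' R' Qs' R'' :
    phase1_group Q R Q' R' -> phase1 Qs R' Qs' R'' ->
    phase1 (Q :: Qs) R (Q' :: Qs') R''.

Definition thin (Q : seq V) : bool := size Q == l * h Q.
Definition fat (Q : seq V) : bool := l * h Q + 1 <= size Q.
Definition conflicting (Q R : seq V) : bool := has (fun v => pillar Q v && pillar R v) Q.
Definition dead (Q R : seq V) : bool := thin Q && conflicting Q R.
Definition alive (Q R : seq V) : bool := ~~ dead Q R.
Definition alive_value (Qs : seq (seq V)) (R : seq V) (v : V) : Prop :=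
  exists2 Q, Q \in Qs & alive Q R && (0 < hv Q v).

Definition rem_each (P Q : seq V) : seq V := foldr (fun p q => rem p q) Q P.
Definition pillars (Q : seq V) : seq V := undup (filter (pillar Q) Q).

Inductive phase2_step (Qs : seq (seq V)) (R : seq V) : seq (seq V) -> seq V -> Prop :=
| p2_fat v i :
    alive_value Qs R v ->
    (forall w, alive_value Qs R w -> hv R v <= hv R w) ->
    i < size Qs -> alive (nth [::] Qs i) R -> 0 < hv (nth [::] Qs i) v ->
    fat (nth [::] Qs i) ->
    phase2_step Qs R (set_nth [::] Qs i (rem v (nth [::] Qs i))) (v :: R)
| p2_thin v i :
    alive_value Qs R v ->
    (forall w, alive_value Qs R w -> hv R v <= hv R w) ->
    i < size Qs -> alive (nth [::] Qs i) R -> 0 < hv (nth [::] Qs i) v ->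
    thin (nth [::] Qs i) ->
    phase2_step Qs R (set_nth [::] Qs i (rem_each (pillars (nth [::] Qs i)) (nth [::] Qs i)))
      (pillars (nth [::] Qs i) ++ R).

(* phase2_terminates Qs R Rf : starting Phase Two from state (Qs, R), the
   algorithm performs iterations and terminates (R becomes l-eligible) during
   Phase Two, with final R equal to Rf. *)
Inductive phase2_terminates : seq (seq V) -> seq V -> seq V -> Prop :=
| p2t_stop Qs R Qs' R' :
    phase2_step Qs R Qs' R' -> eligible R' -> phase2_terminates Qs R R'
| p2t_cont Qs R Qs' R' Rf :
    phase2_step Qs R Qs' R' -> ~~ eligible R' ->
    phase2_terminates Qs' R' Rf -> phase2_terminates Qs R Rf.

End Anon.

(* QI-groups of a table T : seq (QI * SA), listed along an enumeration qs
   of the distinct QI values. *)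
Definition qi_group (QI V : eqType) (T : seq (QI * V)) (q : QI) : seq V :=
  [seq t.2 | t <- T & t.1 == q].

(** Phase One leaves every group l-eligible, and each Phase Two iteration
    keeps all groups l-eligible, does not increase h(R), and adds at most l
    tuples to R.  For a fat group Q the chosen value v has h(R,v) < h(R):
    otherwise each of the d distinct values of Q occurs at least h(R) times
    in R, so d h(R) <= |R| < l h(R), whereas l h(Q) <= |Q| <= d h(Q) forces
    l <= d.  An alive thin group is not conflicting, so its pillars are not
    pillars of R and adding one tuple of each keeps h(R).  Before the last
    iteration R is not l-eligible, i.e. |R| <= l h(R) - 1 <= l h(Rdot) - 1,
    and the last iteration adds at most l tuples. *)

From mathcomp Require Import all_boot zify.
Set Implicit Arguments. Unset Strict Implicit. Unset Printing Implicit Defensive.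

Lemma all_set_nth (T : Type) (a : pred T) x0 (s : seq T) i y :
  i < size s -> all a s -> a y -> all a (set_nth x0 s i y).
Proof.
elim: s i => [|x s IH] [|i] //= ltis /andP[ax as_] ay; first by rewrite ay.
by rewrite ax IH.
Qed.

Section Multiplicities.
Variable T : eqType.
Implicit Types (s P : seq T).

Lemma sum_count_mem P s : uniq P -> \sum_(p <- P) count_mem p s = count (mem P) s.
Proof.
move=> uP; elim: s => [|x s IH] /=; first by rewrite big1.
rewrite big_split /= IH -(count_uniq_mem x uP); congr (_ + _).
by rewrite -sum1_count [RHS]big_mkcond; apply: eq_bigr => p _ /=; rewrite eq_sym; case: (p == x).
Qed.

Lemma sum_nat_const_seq (I : Type) (r : seq I) n : \sum_(i <- r) n = size r * n.
Proof. by rewrite big_const_seq count_predT iter_addn_0 mulnC. Qed.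

Lemma size_mul_leq_count P s a : uniq P -> {in P, forall p, a <= count_mem p s} ->
  size P * a <= size s.
Proof.
move=> uP aP; rewrite -sum_nat_const_seq; apply: leq_trans (count_size (mem P) s).
by rewrite -sum_count_mem // big_seq [leqRHS]big_seq; apply: leq_sum.
Qed.

Lemma size_leq_undup_mul s b : {in s, forall x, count_mem x s <= b} ->
  size s <= size (undup s) * b.
Proof.
move=> sb; rewrite -sum_nat_const_seq.
have -> : size s = count (mem (undup s)) s.
  by rewrite -count_predT; apply: eq_in_count => x; rewrite /= mem_undup => ->.
rewrite -sum_count_mem ?undup_uniq // big_seq [leqRHS]big_seq; apply: leq_sum => x.
by rewrite mem_undup; apply: sb.
Qed.

End Multiplicities.

Section Pillars.
Variable V : eqType.
Implicit Types (P Q R : seq V) (v w : V).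

Lemma hv_notin Q w : w \notin Q -> hv Q w = 0.
Proof. exact/count_memPn. Qed.

Lemma hv_leq_h Q w : hv Q w <= h Q.
Proof.
by have [wQ|/hv_notin ->] := boolP (w \in Q); first exact: (bigmaxn_sup_seq _ wQ).
Qed.

Lemma h_leq Q n : {in Q, forall w, hv Q w <= n} -> h Q <= n.
Proof. by move=> Qn; apply/bigmax_leqP_seq => w wQ _; apply: Qn. Qed.

Lemma hv_gt0 Q w : (0 < hv Q w) = (w \in Q).
Proof. by rewrite /hv -has_count has_pred1. Qed.

Lemma hv_lt_h Q w : 0 < h Q -> ~~ pillar Q w -> hv Q w < h Q.
Proof.
move=> hQ0; rewrite /pillar ltn_neqAle hv_leq_h andbT.
by have [wQ|/hv_notin ->] := boolP (w \in Q); rewrite /= ?andbT // eq_sym -lt0n.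
Qed.

Lemma mem_pillars Q p : (p \in pillars Q) = pillar Q p.
Proof. by rewrite mem_undup mem_filter andb_idr // => /andP[]. Qed.

Lemma pillars_subset Q : {subset pillars Q <= Q}.
Proof. by move=> p; rewrite mem_pillars => /andP[]. Qed.

Lemma size_pillars_mul_h Q : size (pillars Q) * h Q <= size Q.
Proof.
apply: size_mul_leq_count; first exact: undup_uniq.
by move=> p; rewrite mem_pillars => /andP[_ /eqP <-].
Qed.

Lemma h_rem Q v : h (rem v Q) <= h Q.
Proof.
by apply: h_leq => w _; rewrite /hv count_mem_rem; apply: leq_trans (leq_subr _ _) (hv_leq_h _ _).
Qed.

Lemma h_cat_uniq P R : uniq P -> {in P, forall p, hv R p < h R} -> h (P ++ R) <= h R.
Proof.
move=> uP PR; apply: h_leq => w _; rewrite /hv count_cat count_uniq_mem //.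
by have [/PR|_] := boolP (w \in P); rewrite ?add0n ?hv_leq_h.
Qed.

Lemma hv_rem_each P Q w : uniq P -> hv (rem_each P Q) w = hv Q w - (w \in P).
Proof.
elim: P => [|p P IH] /=; first by rewrite subn0.
move=> /andP[pP uP]; rewrite /hv count_mem_rem -/(hv _ w) IH // in_cons -subnDA.
by case: eqVneq => [<-|_]; rewrite /= ?(negbTE pP) ?addn0.
Qed.

Lemma size_rem_each P Q : uniq P -> {subset P <= Q} ->
  size (rem_each P Q) = size Q - size P.
Proof.
elim: P => [|p P IH] /=; first by rewrite subn0.
move=> /andP[pP uP] PQ.
have pQ' : p \in rem_each P Q.
  by rewrite -hv_gt0 hv_rem_each // (negbTE pP) subn0 hv_gt0 PQ ?mem_head.
by rewrite size_rem // IH // => [|x xP]; rewrite ?subnS // PQ // in_cons xP orbT.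
Qed.

Lemma h_rem_each_pillars Q : h (rem_each (pillars Q) Q) <= (h Q).-1.
Proof.
apply: h_leq => w _; rewrite hv_rem_each ?undup_uniq // mem_pillars.
have [/andP[_ /eqP ->]|wNP] := boolP (pillar Q w); first by rewrite /= subn1 leqnn.
have [wQ|/hv_notin ->] := boolP (w \in Q); last by [].
have hQ0 : 0 < h Q by rewrite (leq_trans _ (hv_leq_h Q w)) ?hv_gt0.
by rewrite subn0 -ltnS prednK // hv_lt_h.
Qed.

End Pillars.

Section Anonymization.
Variables (V : eqType) (l : nat).
Implicit Types (Q R : seq V) (Qs : seq (seq V)) (v w : V).

Lemma not_eligible R : ~~ eligible l R = (size R < l * h R).
Proof. by rewrite /eligible ltnNge. Qed.

Lemma eligible_rem Q v : fat l Q -> v \in Q -> eligible l (rem v Q).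
Proof.
rewrite /fat /eligible => fatQ vQ; rewrite size_rem //.
apply: leq_trans (_ : l * h Q <= _); first by rewrite leq_mul2l h_rem orbT.
by move: fatQ; lia.
Qed.

Lemma size_pillars_thin Q : thin l Q -> size (pillars Q) <= l.
Proof.
rewrite /thin => /eqP sizeQ; have [hQ0|hQ_gt0] := posnP (h Q).
  have := uniq_leq_size (undup_uniq _) (@pillars_subset _ Q).
  by rewrite sizeQ hQ0 muln0 leqn0 => /eqP ->.
by rewrite -(leq_pmul2r hQ_gt0) -sizeQ size_pillars_mul_h.
Qed.

Lemma eligible_rem_each_pillars Q : thin l Q -> eligible l (rem_each (pillars Q) Q).
Proof.
move=> thinQ; have kl := size_pillars_thin thinQ; move/eqP: thinQ => sizeQ.
rewrite /eligible size_rem_each ?undup_uniq //; last exact: pillars_subset.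
apply: leq_trans (leq_mul (leqnn l) (h_rem_each_pillars Q)) _.
by rewrite sizeQ -subn1 mulnBr muln1 leq_sub2l.
Qed.

Lemma hv_min_lt_h Q R v : eligible l Q -> v \in Q -> ~~ eligible l R ->
  {in Q, forall w, hv R v <= hv R w} -> hv R v < h R.
Proof.
move=> eligQ vQ; rewrite not_eligible => sizeR minv; rewrite ltnNge; apply/negP => hRv.
have hQ0 : 0 < h Q by rewrite (leq_trans _ (hv_leq_h Q v)) ?hv_gt0.
have few : size (undup Q) * h R <= size R.
  by apply: size_mul_leq_count (undup_uniq Q) _ => w; rewrite mem_undup => /minv/(leq_trans hRv).
have many : l * h Q <= size (undup Q) * h Q.
  by apply: leq_trans eligQ (size_leq_undup_mul _) => w _; apply: hv_leq_h.
rewrite leq_pmul2r // in many.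
by move: (leq_trans (leq_mul many (leqnn (h R))) few); rewrite leqNgt sizeR.
Qed.

Lemma phase2_step_invariant Qs R Qs' R' : phase2_step l Qs R Qs' R' ->
  all (eligible l) Qs -> ~~ eligible l R ->
  [/\ all (eligible l) Qs', h R' <= h R & size R' <= size R + l].
Proof.
move=> step eligQs nR; have sizeR := nR; rewrite not_eligible in sizeR.
have := leq_ltn_trans (leq0n _) sizeR; rewrite muln_gt0 => /andP[l_gt0 hR_gt0].
case: step => v i _ minv ltis aliveQ vQ kindQ; set Q := nth [::] Qs i in aliveQ vQ kindQ *;
  have eligQ : eligible l Q by apply: (all_nthP [::] eligQs).
- split; first by apply: all_set_nth => //; apply: eligible_rem; rewrite -?hv_gt0.
  + apply: (h_cat_uniq (P := [:: v])) => // _ /[1!inE] /eqP ->.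
    apply: hv_min_lt_h eligQ _ nR _; first by rewrite -hv_gt0.
    by move=> w wQ; apply: minv; exists Q; rewrite ?mem_nth // aliveQ hv_gt0.
  + by rewrite /= -addn1 leq_add2l.
- have noconfl : ~~ conflicting Q R by move: aliveQ; rewrite /alive /dead kindQ.
  split; first by apply: all_set_nth => //; apply: eligible_rem_each_pillars.
  + apply: h_cat_uniq (undup_uniq _) _ => p pP; apply: hv_lt_h hR_gt0 _.
    have pillQ : pillar Q p by rewrite -mem_pillars.
    by move/hasPn: noconfl => /(_ p (pillars_subset pP)); rewrite pillQ.
  + by rewrite size_cat addnC leq_add2l size_pillars_thin.
Qed.

Lemma phase1_group_eligible Q R Q' R' : phase1_group l Q R Q' R' -> eligible l Q'.
Proof. by elim. Qed.

Lemma phase1_eligible Qs R Qs' R' : phase1 l Qs R Qs' R' -> all (eligible l) Qs'.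
Proof. by elim=> //= _ _ _ _ _ _ _ /phase1_group_eligible -> _ ->. Qed.

Lemma phase2_terminates_size Qs R Rf : phase2_terminates l Qs R Rf ->
  all (eligible l) Qs -> ~~ eligible l R -> size Rf + 1 <= l * h R + l.
Proof.
elim=> [Qs0 R0 Qs' R' step _ | Qs0 R0 Qs' R' Rf0 step nR' _ IH] eligQs nR;
  have [eligQs' hR' sizeR'] := phase2_step_invariant step eligQs nR;
  rewrite not_eligible in nR.
  by lia.
by have := IH eligQs' nR'; have := leq_mul (leqnn l) hR'; lia.
Qed.

End Anonymization.

Theorem lemma6 (QI V : eqType) (l : nat) (T : seq (QI * V)) (qs : seq QI)
  (Qs1 : seq (seq V)) (Rdot Rddot : seq V) :
  eligible l [seq t.2 | t <- T] ->
  perm_eq qs (undup [seq t.1 | t <- T]) ->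
  phase1 l [seq qi_group T q | q <- qs] [::] Qs1 Rdot ->
  ~~ eligible l Rdot ->
  phase2_terminates l Qs1 Rdot Rddot ->
  size Rddot + 1 <= l * h Rdot + l.
Proof.
move=> _ _ phase1_run nRdot phase2_run.
exact: phase2_terminates_size phase2_run (phase1_eligible phase1_run) nRdot.
Qed.
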